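(* For a Markov category $\mathcal C$, the following are equivalent: (i) $\mathcal C$ is positive. (ii) For every deterministic morphism $p\colon A\to X$, its bloom $p_{\mathrm{ic}}=(p\otimes\mathrm{id}_A)\circ\mathrm{copy}_A\colon A\to X\otimes A$ is an initial dilation of $p$.
   Context: A Markov category is a symmetric monoidal category $(\mathcal C,\otimes,I)$ with commutative comonoids $\mathrm{copy}_X\colon X\to X\otimes X$, $\mathrm{del}_X\colon X\to I$ compatible with $\otimes$, with $I$ terminal. $f\colon A\to X$ is deterministic if $\mathrm{copy}_X\circ f=(f\otimes f)\circ\mathrm{copy}_A$. $\mathcal C$ is positive if for all $f\colon X\to Y$, $g\colon Y\to Z$ with $g\circ f$ deterministic, $(\mathrm{id}_Y\otimes g)\circ\mathrm{copy}_Y\circ f=(f\otimes (g\circ f))\circ\mathrm{copy}_X$. A dilation of $p\colon A\to X$ is $\pi\colon A\to X\otimes E$ with $(\mathrm{id}_X\otimes\mathrm{del}_E)\circ\pi=p$. For a dilation $\pi\colon A\to X\otimes E$ and $f_1,f_2\colon E\to E'$, these are $\pi$-dilationally equal if for every dilation $\rho\colon A\to X\otimes E\otimes F$ of $\pi$, $(\mathrm{id}_X\otimes f_1\otimes\mathrm{id}_F)\circ\rho=(\mathrm{id}_X\otimes f_2\otimes\mathrm{id}_F)\circ\rho$. A dilation $\pi\colon A\to X\otimes E$ of $p$ is initial if for every dilation $\pi'\colon A\to X\otimes E'$ of $p$ there is $f\colon E\to E'$ with $(\mathrm{id}_X\otimes f)\circ\pi=\pi'$, unique up to $\pi$-dilational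 equality. *)

Set Implicit Arguments.
Unset Strict Implicit.

Record Category := {
  ob :> Type;
  hom : ob -> ob -> Type;
  comp : forall A B C : ob, hom B C -> hom A B -> hom A C;
  idm : forall A : ob, hom A A;
  comp_id_l : forall A B (f : hom A B), comp (idm B) f = f;
  comp_id_r : forall A B (f : hom A B), comp f (idm A) = f;
  comp_assoc : forall A B C D (f : hom A B) (g : hom B C) (h : hom C D),
      comp h (comp g f) = comp (comp h g) f
}.
Arguments hom {c} _ _.
Arguments comp {c A B C} _ _.
Arguments idm {c} A.

Declare Scope cat_scope.
Local Open Scope cat_scope.
Notation "g \o f" := (comp g f) (at level 40, left associativity) : cat_scope.

Record SymMonoidal (C : Category) := {
  tens : C -> C -> C;
  tensm : forall (A B A' B' : C), hom A B -> hom A' B' -> hom (tens A A') (tens B B');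
  unitI : C;
  tens_id : forall A B : C, tensm (idm A) (idm B) = idm (tens A B);
  tens_comp : forall (A B D A' B' D' : C) (f : hom A B) (g : hom B D)
                (f' : hom A' B') (g' : hom B' D'),
      tensm (g \o f) (g' \o f') = tensm g g' \o tensm f f';
  assoc : forall A B D : C, hom (tens (tens A B) D) (tens A (tens B D));
  assoc_inv : forall A B D : C, hom (tens A (tens B D)) (tens (tens A B) D);
  lunit : forall A : C, hom (tens unitI A) A;
  lunit_inv : forall A : C, hom A (tens unitI A);
  runit : forall A : C, hom (tens A unitI) A;
  runit_inv : forall A : C, hom A (tens A unitI);
  swap : forall A B : C, hom (tens A B) (tens B A);
  assoc_iso1 : forall A B D, assoc_inv A B D \o assoc A B D = idm _;
  assoc_iso2 : forall A B D, assoc A B D \o assoc_inv A B D = idm _;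
  lunit_iso1 : forall A, lunit_inv A \o lunit A = idm _;
  lunit_iso2 : forall A, lunit A \o lunit_inv A = idm _;
  runit_iso1 : forall A, runit_inv A \o runit A = idm _;
  runit_iso2 : forall A, runit A \o runit_inv A = idm _;
  swap_invol : forall A B, swap B A \o swap A B = idm _;
  assoc_nat : forall A B D A' B' D' (f : hom A A') (g : hom B B') (h : hom D D'),
      assoc A' B' D' \o tensm (tensm f g) h = tensm f (tensm g h) \o assoc A B D;
  lunit_nat : forall A B (f : hom A B), lunit B \o tensm (idm unitI) f = f \o lunit A;
  runit_nat : forall A B (f : hom A B), runit B \o tensm f (idm unitI) = f \o runit A;
  swap_nat : forall A B A' B' (f : hom A A') (g : hom B B'),
      swap A' B' \o tensm f g = tensm g f \o swap A B;
  pentagon : forall A B D E,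
      assoc A B (tens D E) \o assoc (tens A B) D E
      = tensm (idm A) (assoc B D E) \o assoc A (tens B D) E \o tensm (assoc A B D) (idm E);
  triangle : forall A B,
      tensm (idm A) (lunit B) \o assoc A unitI B = tensm (runit A) (idm B);
  hexagon : forall A B D,
      assoc B D A \o swap A (tens B D) \o assoc A B D
      = tensm (idm B) (swap A D) \o assoc B A D \o tensm (swap A B) (idm D)
}.
Arguments tens {C} _ _ _.
Arguments tensm {C} _ {A B A' B'} _ _.
Arguments unitI {C} _.
Arguments assoc {C} _ A B D.
Arguments assoc_inv {C} _ A B D.
Arguments lunit {C} _ A.
Arguments lunit_inv {C} _ A.
Arguments runit {C} _ A.
Arguments runit_inv {C} _ A.
Arguments swap {C} _ A B.

Definition midswap (C : Category) (M : SymMonoidal C) (A B : C) :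
  hom (tens M (tens M A A) (tens M B B)) (tens M (tens M A B) (tens M A B)) :=
  assoc_inv M A B (tens M A B)
  \o tensm M (idm A)
       (assoc M B A B \o tensm M (swap M A B) (idm B) \o assoc_inv M A B B)
  \o assoc M A A (tens M B B).

Record MarkovStr (C : Category) (M : SymMonoidal C) := {
  copy : forall A : C, hom A (tens M A A);
  del : forall A : C, hom A (unitI M);
  unit_terminal : forall (A : C) (f : hom A (unitI M)), f = del A;
  copy_counit_l : forall A, lunit M A \o tensm M (del A) (idm A) \o copy A = idm A;
  copy_counit_r : forall A, runit M A \o tensm M (idm A) (del A) \o copy A = idm A;
  copy_coassoc : forall A,
      assoc M A A A \o tensm M (copy A) (idm A) \o copy A
      = tensm M (idm A) (copy A) \o copy A;
  copy_comm : forall A, swap M A A \o copy A = copy A;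
  copy_tens : forall A B,
      copy (tens M A B) = midswap M A B \o tensm M (copy A) (copy B);
  del_tens : forall A B,
      del (tens M A B) = lunit M (unitI M) \o tensm M (del A) (del B)
}.
Arguments copy {C M} _ A.
Arguments del {C M} _ A.

Record MarkovCategory := {
  mc_cat :> Category;
  mc_mon : SymMonoidal mc_cat;
  mc_mk : MarkovStr mc_mon
}.

Section MarkovDefs.
Variable C : MarkovCategory.
Local Notation M := (mc_mon C).
Local Notation K := (mc_mk C).
Local Notation "A ⊗ B" := (tens M A B) (at level 34, left associativity).
Local Notation "f ⊗m g" := (tensm M f g) (at level 34, left associativity).

Definition deterministic (A X : C) (f : hom A X) : Prop :=
  copy K X \o f = (f ⊗m f) \o copy K A.

Definition positive : Prop :=
  forall (X Y Z : C) (f : hom X Y) (g : hom Y Z),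
    deterministic (g \o f) ->
    (idm Y ⊗m g) \o copy K Y \o f = (f ⊗m (g \o f)) \o copy K X.

Definition dilation (A X E : C) (p : hom A X) (pi : hom A (X ⊗ E)) : Prop :=
  runit M X \o (idm X ⊗m del K E) \o pi = p.

Definition dil_equal (A X E E' : C) (pi : hom A (X ⊗ E)) (f1 f2 : hom E E') : Prop :=
  forall (F : C) (rho : hom A ((X ⊗ E) ⊗ F)),
    dilation pi rho ->
    ((idm X ⊗m f1) ⊗m idm F) \o rho = ((idm X ⊗m f2) ⊗m idm F) \o rho.

Definition initial_dilation (A X E : C) (p : hom A X) (pi : hom A (X ⊗ E)) : Prop :=
  dilation p pi /\
  forall (E' : C) (pi' : hom A (X ⊗ E')), dilation p pi' ->
    (exists f : hom E E', (idm X ⊗m f) \o pi = pi') /\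
    (forall f1 f2 : hom E E',
        (idm X ⊗m f1) \o pi = pi' -> (idm X ⊗m f2) \o pi = pi' ->
        dil_equal pi f1 f2).

Definition bloom (A X : C) (p : hom A X) : hom A (X ⊗ A) :=
  (p ⊗m idm A) \o copy K A.

End MarkovDefs.


(* Write fork u v for (u ⊗ v) ∘ copy, and proj_l, proj_r for the two marginals
   of X ⊗ E, so that every h : A -> X ⊗ E satisfies h = fork proj_l proj_r ∘ h.
   Positivity applied to h and proj_l says that, whenever proj_l ∘ h is
   deterministic, h = fork (proj_l ∘ h) (proj_r ∘ h).  Hence a dilation π' of a
   deterministic p factors as (id ⊗ proj_r ∘ π') ∘ bloom p, and a dilation ρ of
   the (again deterministic) bloom is fork (bloom p) (proj_r ∘ ρ), on which
   (id ⊗ f) ⊗ id acts only through (id ⊗ f) ∘ bloom p = π'.  Conversely, if the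
   bloom of p = g ∘ f is initial, the dilation fork g id ∘ f of p factors through
   it by a map whose second marginal forces it to be f, and this factorisation
   is the positivity equation up to a swap. *)

Local Open Scope cat_scope.

Section MarkovCalculus.
Variable C : MarkovCategory.
Local Notation M := (mc_mon C).
Local Notation K := (mc_mk C).
Local Notation "f ⊗ g" := (tensm M f g) (at level 34, left associativity).
Local Notation I := (unitI M).
Local Notation ρ := (runit M).
Local Notation λ := (lunit M).
Local Notation α := (assoc M).
Local Notation αi := (assoc_inv M).
Local Notation σ := (swap M).
Local Notation cp := (copy K).
Local Notation dl := (del K).
Local Notation id := idm.

Ltac reassoc := repeat rewrite <- comp_assoc.

Lemma comp_eq_in_chain {B D E : C} (f : hom D E) (g : hom B D) (h : hom B E) :
  f \o g = h -> forall F (k : hom F B), f \o (g \o k) = h \o k.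
Proof. intros H F k. rewrite comp_assoc, H. reflexivity. Qed.

Tactic Notation "chain_rewrite" open_constr(e) :=
  rewrite (comp_eq_in_chain _ _ _ e); reassoc.
Tactic Notation "chain_rewrite" "<-" open_constr(e) :=
  rewrite (comp_eq_in_chain _ _ _ (eq_sym e)); reassoc.

Lemma tens_comp_in_chain {A B D A' B' D' F : C} (f : hom A B) (g : hom B D)
    (f' : hom A' B') (g' : hom B' D') (k : hom F _) :
  (g ⊗ g') \o ((f ⊗ f') \o k) = ((g \o f) ⊗ (g' \o f')) \o k.
Proof. rewrite tens_comp, comp_assoc. reflexivity. Qed.

Ltac tens_simpl :=
  repeat (first [ rewrite <- comp_assoc | rewrite tens_comp_in_chain
                | rewrite <- tens_comp | rewrite tens_id
                | rewrite comp_id_l | rewrite comp_id_r ]).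

Lemma to_unit_eq {A : C} (f g : hom A I) : f = g.
Proof. rewrite (unit_terminal K f), (unit_terminal K g). reflexivity. Qed.

Lemma assoc_inv_nat {A B D A' B' D' : C} (f : hom A A') (g : hom B B') (h : hom D D') :
  αi A' B' D' \o (f ⊗ (g ⊗ h)) = ((f ⊗ g) ⊗ h) \o αi A B D.
Proof.
  rewrite <- (comp_id_r (αi A' B' D' \o _)), <- (assoc_iso2 M A B D). reassoc.
  rewrite (comp_assoc (αi A B D) (α A B D)), <- assoc_nat.
  rewrite !comp_assoc, assoc_iso1, comp_id_l. reflexivity.
Qed.

Lemma triangle_inv (A B : C) : id A ⊗ λ B = (ρ A ⊗ id B) \o αi A I B.
Proof. rewrite <- triangle, <- comp_assoc, assoc_iso2, comp_id_r. reflexivity. Qed.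

Definition proj_l (X E : C) : hom (tens M X E) X := ρ X \o (id X ⊗ dl E).
Definition proj_r (X E : C) : hom (tens M X E) E := λ E \o (dl X ⊗ id E).

Definition fork {A X Y : C} (u : hom A X) (v : hom A Y) : hom A (tens M X Y) :=
  (u ⊗ v) \o cp A.

Lemma dilationE (A X E : C) (p : hom A X) (pi : hom A (tens M X E)) :
  dilation p pi = (proj_l X E \o pi = p).
Proof. reflexivity. Qed.

Lemma bloomE (A X : C) (p : hom A X) : bloom p = fork p (id A).
Proof. reflexivity. Qed.

Lemma tens_fork {A X Y X' Y' : C} (f : hom X X') (g : hom Y Y') (u : hom A X) (v : hom A Y) :
  (f ⊗ g) \o fork u v = fork (f \o u) (g \o v).
Proof. unfold fork. rewrite comp_assoc, tens_comp. reflexivity. Qed.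

Lemma swap_fork {A X Y : C} (u : hom A X) (v : hom A Y) : σ X Y \o fork u v = fork v u.
Proof.
  unfold fork. rewrite comp_assoc, swap_nat, <- comp_assoc, copy_comm. reflexivity.
Qed.

Lemma proj_l_fork {A X Y : C} (u : hom A X) (v : hom A Y) : proj_l X Y \o fork u v = u.
Proof.
  unfold proj_l, fork. tens_simpl. rewrite (to_unit_eq (dl Y \o v) (dl A)).
  replace (u ⊗ dl A) with ((u ⊗ id I) \o (id A ⊗ dl A)) by (tens_simpl; reflexivity).
  reassoc. chain_rewrite (runit_nat _ _).
  rewrite (comp_assoc (cp A) _ (ρ A)), copy_counit_r. apply comp_id_r.
Qed.

Lemma proj_r_fork {A X Y : C} (u : hom A X) (v : hom A Y) : proj_r X Y \o fork u v = v.
Proof.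
  unfold proj_r, fork. tens_simpl. rewrite (to_unit_eq (dl X \o u) (dl A)).
  replace (dl A ⊗ v) with ((id I ⊗ v) \o (dl A ⊗ id A)) by (tens_simpl; reflexivity).
  reassoc. chain_rewrite (lunit_nat _ _).
  rewrite (comp_assoc (cp A) _ (λ A)), copy_counit_l. apply comp_id_r.
Qed.

Lemma proj_l_tens_assoc_inv (X E Y : C) (q : hom Y E) :
  (proj_l X E ⊗ q) \o αi X E Y = id X ⊗ (proj_r E E \o (id E ⊗ q)).
Proof.
  replace (proj_l X E ⊗ q)
    with ((ρ X ⊗ id E) \o ((id X ⊗ dl E) ⊗ id E) \o ((id X ⊗ id E) ⊗ q))
    by (unfold proj_l; tens_simpl; reflexivity).
  reassoc. rewrite <- assoc_inv_nat. chain_rewrite <- (assoc_inv_nat _ _ _).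
  chain_rewrite <- (triangle_inv _ _). unfold proj_r. tens_simpl. reflexivity.
Qed.

Lemma proj_r_shuffle (X E : C) :
  proj_r E E \o ((id E ⊗ proj_r X E) \o (α E X E \o ((σ X E ⊗ id E) \o αi X E E)))
  = proj_r E E \o proj_r X (tens M E E).
Proof.
  replace (id E ⊗ proj_r X E) with ((id E ⊗ λ E) \o (id E ⊗ (dl X ⊗ id E)))
    by (unfold proj_r; tens_simpl; reflexivity).
  reassoc. chain_rewrite <- (assoc_nat _ _ _ _). chain_rewrite (triangle _ _ _).
  replace (proj_r E E \o proj_r X (tens M E E)) with (λ E \o (dl X ⊗ proj_r E E))
    by (symmetry; unfold proj_r at 2; reassoc; rewrite (comp_assoc _ (λ _)), <- lunit_nat;
        unfold proj_r; tens_simpl; reflexivity).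
  replace (dl X ⊗ proj_r E E) with ((id I ⊗ λ E) \o (dl X ⊗ (dl E ⊗ id E)))
    by (unfold proj_r; tens_simpl; reflexivity).
  rewrite triangle_inv. reassoc. rewrite assoc_inv_nat.
  unfold proj_r. tens_simpl. do 3 f_equal. apply to_unit_eq.
Qed.

Lemma fork_proj (X E : C) : fork (proj_l X E) (proj_r X E) = id (tens M X E).
Proof.
  unfold fork. rewrite copy_tens. unfold midswap. reassoc.
  chain_rewrite (proj_l_tens_assoc_inv _ _ _ _). rewrite tens_comp_in_chain, comp_id_l.
  reassoc. rewrite proj_r_shuffle.
  replace (id X ⊗ (proj_r E E \o proj_r X (tens M E E)))
    with ((id X ⊗ proj_r E E) \o (id X ⊗ λ _) \o (id X ⊗ (dl X ⊗ id _)))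
    by (unfold proj_r; tens_simpl; reflexivity).
  reassoc. chain_rewrite <- (assoc_nat _ _ _ _). chain_rewrite (triangle _ _ _).
  unfold proj_r. tens_simpl.
  rewrite (comp_assoc (cp X) _ (ρ X)), copy_counit_r.
  rewrite (comp_assoc (cp E) _ (λ E)), copy_counit_l. apply tens_id.
Qed.

Lemma midswap_nat {A B A' B' : C} (a1 a2 : hom A A') (b1 b2 : hom B B') :
  midswap M A' B' \o ((a1 ⊗ a2) ⊗ (b1 ⊗ b2)) = ((a1 ⊗ b1) ⊗ (a2 ⊗ b2)) \o midswap M A B.
Proof.
  unfold midswap. reassoc. rewrite assoc_nat. chain_rewrite <- (assoc_inv_nat _ _ _).
  tens_simpl. rewrite assoc_inv_nat. chain_rewrite <- (assoc_nat _ _ _ _).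
  tens_simpl. rewrite swap_nat. reflexivity.
Qed.

Lemma copy_coassoc_inv (A : C) :
  αi A A A \o ((id A ⊗ cp A) \o cp A) = (cp A ⊗ id A) \o cp A.
Proof.
  rewrite <- copy_coassoc. reassoc.
  rewrite (comp_assoc _ (α _ _ _)), assoc_iso1, comp_id_l. reflexivity.
Qed.

Lemma copy_copy_assoc (A : C) :
  α A A (tens M A A) \o ((cp A ⊗ cp A) \o cp A) = (id A ⊗ ((id A ⊗ cp A) \o cp A)) \o cp A.
Proof.
  replace (cp A ⊗ cp A) with (((id A ⊗ id A) ⊗ cp A) \o (cp A ⊗ id A))
    by (tens_simpl; reflexivity).
  reassoc. chain_rewrite (assoc_nat _ _ _ _).
  rewrite (comp_assoc (cp A) _ (α A A A)), copy_coassoc. tens_simpl. reflexivity.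
Qed.

Lemma copy3_swap (A : C) :
  α A A A \o ((σ A A ⊗ id A) \o (αi A A A \o ((id A ⊗ cp A) \o cp A)))
  = (id A ⊗ cp A) \o cp A.
Proof.
  rewrite copy_coassoc_inv, tens_comp_in_chain, copy_comm, comp_id_l, comp_assoc.
  apply copy_coassoc.
Qed.

Lemma copy_deterministic (A : C) : deterministic (cp A).
Proof.
  unfold deterministic. rewrite copy_tens. unfold midswap. reassoc.
  rewrite copy_copy_assoc. tens_simpl. rewrite copy3_swap, <- copy_copy_assoc. reassoc.
  rewrite (comp_assoc _ (α _ _ _)), assoc_iso1, comp_id_l. reflexivity.
Qed.

Lemma deterministic_id (A : C) : deterministic (id A).
Proof. unfold deterministic. rewrite tens_id, comp_id_l, comp_id_r. reflexivity. Qed.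

Lemma deterministic_comp {A B D : C} (f : hom A B) (g : hom B D) :
  deterministic f -> deterministic g -> deterministic (g \o f).
Proof.
  unfold deterministic. intros Hf Hg.
  rewrite comp_assoc, Hg. reassoc. rewrite Hf. tens_simpl. reflexivity.
Qed.

Lemma deterministic_tens {A B A' B' : C} (f : hom A A') (g : hom B B') :
  deterministic f -> deterministic g -> deterministic (f ⊗ g).
Proof.
  unfold deterministic. intros Hf Hg. rewrite !copy_tens. reassoc.
  rewrite <- tens_comp, Hf, Hg, tens_comp. chain_rewrite (midswap_nat _ _ _ _).
  reflexivity.
Qed.

Lemma deterministic_fork {A X Y : C} (u : hom A X) (v : hom A Y) :
  deterministic u -> deterministic v -> deterministic (fork u v).
Proof.
  intros Hu Hv. apply deterministic_comp.
  - apply copy_deterministic.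
  - apply deterministic_tens; assumption.
Qed.

Lemma positive_split {A X E : C} (h : hom A (tens M X E)) :
  positive C -> deterministic (proj_l X E \o h) ->
  h = fork (proj_l X E \o h) (proj_r X E \o h).
Proof.
  intros Hpos Hdet.
  assert (Hsplit : fork (id _) (proj_l X E) \o h = fork h (proj_l X E \o h))
    by exact (Hpos _ _ _ h (proj_l X E) Hdet).
  transitivity (σ E X \o (proj_r X E ⊗ id X) \o fork (id _) (proj_l X E) \o h).
  - rewrite <- (comp_assoc (fork _ _)), tens_fork, comp_id_r, comp_id_l.
    rewrite swap_fork, fork_proj, comp_id_l. reflexivity.
  - rewrite <- (comp_assoc h), Hsplit, <- comp_assoc, tens_fork, comp_id_l, swap_fork.
    reflexivity.
Qed.

Lemma positive_bloom_initial (A X : C) (p : hom A X) :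
  positive C -> deterministic p -> initial_dilation p (bloom p).
Proof.
  intros Hpos Hp. split.
  { rewrite dilationE, bloomE. apply proj_l_fork. }
  intros E' pi' Hpi'. rewrite dilationE in Hpi'. split.
  - exists (proj_r X E' \o pi').
    rewrite bloomE, tens_fork, comp_id_l, comp_id_r, <- Hpi'.
    symmetry. apply positive_split; [assumption | rewrite Hpi'; assumption].
  - intros f1 f2 Hf1 Hf2 F rho Hrho. rewrite dilationE in Hrho.
    assert (Hdet : deterministic (proj_l (tens M X A) F \o rho)).
    { rewrite Hrho, bloomE. apply deterministic_fork; [assumption | apply deterministic_id]. }
    rewrite (positive_split rho Hpos Hdet), Hrho, !tens_fork, Hf1, Hf2. reflexivity.
Qed.

Lemma bloom_initial_positive :
  (forall (A X : C) (p : hom A X), deterministic p -> initial_dilation p (bloom p)) ->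
  positive C.
Proof.
  intros Hinit X Y Z f g Hdet.
  destruct (Hinit X Z (g \o f) Hdet) as [_ Hfactor].
  destruct (Hfactor Y (fork g (id Y) \o f)) as [[h Hh] _].
  { rewrite dilationE, comp_assoc, proj_l_fork. reflexivity. }
  rewrite bloomE, tens_fork, comp_id_l, comp_id_r in Hh.
  assert (Hhf : h = f).
  { rewrite <- (proj_r_fork (g \o f) h), Hh, comp_assoc, proj_r_fork. apply comp_id_l. }
  rewrite Hhf in Hh.
  change (fork (id Y) g \o f = fork f (g \o f)).
  rewrite <- (swap_fork (g \o f) f), Hh, comp_assoc, swap_fork. reflexivity.
Qed.

End MarkovCalculus.

Theorem proposition4p12 (C : MarkovCategory) :
  positive C <->
  (forall (A X : C) (p : hom A X),
      deterministic p -> initial_dilation p (bloom p)).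
Proof.
  split.
  - intros Hpos A X p. apply positive_bloom_initial, Hpos.
  - apply bloom_initial_positive.
Qed.
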